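(* Fix $n<\omega$ and assume that for every finite quasi-order $P$ the quasi-order $i^F_{\omega^n}(P)$ is a well-quasi-order. Then for every quasi-order $Q$ the following hold. (1) Every $\sigma\in s^F_{=\omega^n}(Q)$ either lies in $i^F_{=\omega^n}(Q)$, or can be written as a concatenation $\sigma=\sigma_0+\sigma_1$ with $\sigma_0\in s^F_{\omega^n}(Q)$ and $\sigma_1\in i^F_{=\omega^n}(Q)$. (2) Every $\sigma\in s^F_{\omega^{n+1}}(Q)$ can be written as a finite concatenation $\sigma_0+\sigma_1+\cdots+\sigma_{k-1}$ with $\sigma_i\in i^F_{\omega^{n+1}}(Q)$ for all $i<k$.
   Context: A well-quasi-order is a quasi-order in which every infinite sequence $(x_i)_{i<\omega}$ has $i<j$ with $x_i\le x_j$. Sequences: a transfinite sequence over $Q$ of length $\alpha$ (with $\alpha\ne0$ an ordinal) is a function $\sigma:\alpha\to Q$, and $|\sigma|=\alpha$; the empty sequence is excluded. Define $\sigma\preceq\tau$ if there is a strictly increasing $f:|\sigma|\to|\tau|$ with $\sigma(i)\le_Q\tau(f(i))$ for all $i$. The concatenation $\sigma+\tau$ has length $|\sigma|+|\tau|$: it equals $\sigma(\iota)$ for $\iota<|\sigma|$ and $\tau(-|\sigma|+\iota)$ for $|\sigma|\le\iota<|\sigma|+|\tau|$. Finite range means the sequence takes finitely many values. A proper tail of $\sigma$ is $i\mapsto\sigma(\delta+i)$ for some $0<\delta<|\sigma|$. The sequence $\sigma$ is indecomposable if it embeds into each of its proper tails. Notation: - $s^F_\alpha(Q)$: finite-range sequences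 of length $<\alpha$; - $i^F_\alpha(Q)$: the indecomposable elements of $s^F_\alpha(Q)$; - $s^F_{=\alpha}(Q)$ and $i^F_{=\alpha}(Q)$: the sequences of length exactly $\alpha$ in $s^F_{\alpha+1}(Q)$ and $i^F_{\alpha+1}(Q)$, respectively. All are ordered by $\preceq$. *)

From mathcomp Require Import all_boot.
From Stdlib Require List.
Set Implicit Arguments. Unset Strict Implicit. Unset Printing Implicit Defensive.

(* An ordinal < omega^omega is represented by the nonincreasing list of
   exponents of its Cantor normal form: [:: e1; ...; ek] stands for
   omega^e1 + ... + omega^ek with e1 >= ... >= ek.  [::] is 0. *)
Definition cnf (a : seq nat) : bool := sorted geq a.

(* strict ordinal order = lexicographic order on CNF lists *)
Fixpoint olt (a b : seq nat) : bool :=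
  match a, b with
  | [::], [::] => false
  | [::], _ :: _ => true
  | _ :: _, [::] => false
  | x :: a', y :: b' => (x < y) || ((x == y) && olt a' b')
  end.

Definition oadd (a b : seq nat) : seq nat :=
  match b with
  | [::] => a
  | y :: _ => [seq x <- a | y <= x] ++ b
  end.

Definition oexp (n : nat) : seq nat := [:: n].

Definition inlen (a i : seq nat) : bool := cnf i && olt i a.

(* transfinite sequence over Q: a length (ordinal) and a function on positions;
   only positions below the length are meaningful. *)
Record tseq (Q : Type) := TSeq { tlen : seq nat; tval : seq nat -> Q }.

Definition wf Q (s : tseq Q) : Prop := cnf (tlen s) /\ tlen s <> [::].

Definition finite_range Q (s : tseq Q) : Prop :=
  exists l : list Q, forall i, inlen (tlen s) i -> List.In (tval s i) l.

Definition embeds Q (le : Q -> Q -> Prop) (s t : tseq Q) : Prop :=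
  exists f : seq nat -> seq nat,
    [/\ forall i, inlen (tlen s) i -> inlen (tlen t) (f i),
        forall i j, inlen (tlen s) i -> inlen (tlen s) j -> olt i j -> olt (f i) (f j)
      & forall i, inlen (tlen s) i -> le (tval s i) (tval t (f i))].

Definition indecomposable Q (le : Q -> Q -> Prop) (s : tseq Q) : Prop :=
  forall d g, cnf d -> cnf g -> d <> [::] -> g <> [::] -> oadd d g = tlen s ->
    embeds le s (TSeq g (fun i => tval s (oadd d i))).

Definition sF Q (alpha : seq nat) (s : tseq Q) : Prop :=
  wf s /\ olt (tlen s) alpha /\ finite_range s.
Definition iF Q (le : Q -> Q -> Prop) (alpha : seq nat) (s : tseq Q) : Prop :=
  sF alpha s /\ indecomposable le s.
Definition sFeq Q (alpha : seq nat) (s : tseq Q) : Prop :=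
  wf s /\ tlen s = alpha /\ finite_range s.
Definition iFeq Q (le : Q -> Q -> Prop) (alpha : seq nat) (s : tseq Q) : Prop :=
  sFeq alpha s /\ indecomposable le s.

Definition concat_eq Q (s s0 s1 : tseq Q) : Prop :=
  [/\ tlen s = oadd (tlen s0) (tlen s1),
      forall i, inlen (tlen s0) i -> tval s i = tval s0 i
    & forall g, inlen (tlen s1) g -> tval s (oadd (tlen s0) g) = tval s1 g].

Definition tseq_equiv Q (s t : tseq Q) : Prop :=
  tlen s = tlen t /\ forall i, inlen (tlen s) i -> tval s i = tval t i.

Fixpoint concat_list Q (s : tseq Q) (ss : list (tseq Q)) : Prop :=
  match ss with
  | nil => False
  | cons s0 ss' =>
      match ss' with
      | nil => tseq_equiv s s0
      | cons _ _ => exists t, wf t /\ concat_eq s s0 t /\ concat_list t ss'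
      end
  end.

Definition quasi_order T (le : T -> T -> Prop) : Prop :=
  (forall x, le x x) /\ (forall x y z, le x y -> le y z -> le x z).

Definition wqo_on X (R : X -> X -> Prop) (A : X -> Prop) : Prop :=
  forall x : nat -> X, (forall k, A (x k)) -> exists i j, i < j /\ R (x i) (x j).

From Pilot Require Import Defs.
From mathcomp Require Import all_boot all_order zify.
From Stdlib Require List.
From Stdlib Require Import Classical ClassicalEpsilon.
Import Order.TTheory Order.DefaultSeqLexiOrder.
Set Implicit Arguments. Unset Strict Implicit. Unset Printing Implicit Defensive.
Local Open Scope order_scope.

(* Fix a sequence f with finitely many values.  By induction on m <= n we show that
   (A m, [has_indec_tail]) every segment of f of length ω^m has an indecomposable final
   segment of length ω^m, and (D (m+1), [has_decomp]) every segment of length < ω^(m+1)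
   is a finite concatenation of indecomposable segments of length < ω^(m+1).  D (m+1) follows from A m and D m by
   splitting the Cantor normal form of the length into blocks ω^e.  For A (m+1), cut a
   segment of length ω^(m+1) into ω blocks of length ω^m and decompose each of them by
   D (m+1): this yields an ω-sequence of indecomposable pieces of length < ω^n.  Coding
   the finitely many values by a finite quasi-order, the hypothesis makes this sequence
   well-quasi-ordered, so from some piece on every piece embeds into arbitrarily late
   ones; the final segment starting there then embeds, block by block, into each of its
   proper tails.  Part (1) of the theorem is A n and part (2) is D (n+1). *)

(* [<] on [seq nat] is the lexicographic order of [Order.DefaultSeqLexiOrder]. *)
Lemma oltE (a b : seq nat) : olt a b = (a < b).
Proof.
elim: a b => [|x a IH] [|y b] //=; rewrite ?ltxi0s ?ltxis0 // ltxi_cons IH.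
by rewrite leEnat; case: ltngtP.
Qed.

Lemma inlenE L i : inlen L i = cnf i && (i < L).
Proof. by rewrite /inlen oltE. Qed.

Lemma cnf_cons x a : cnf (x :: a) = all (fun y => (y <= x)%N) a && cnf a.
Proof. by rewrite /cnf /= path_sortedE //; move=> ? ? ? /= ? ?; lia. Qed.

Lemma cnf_tail x a : cnf (x :: a) -> cnf a.
Proof. by rewrite cnf_cons => /andP[]. Qed.

Lemma lt_oexp L x : (L < [:: x]) = (L == [::]) || (head 0 L < x)%N.
Proof.
case: L => [|y L]; rewrite ?ltxi0s // ltxi_cons ltxis0 implybF !leEnat /=.
by case: ltngtP.
Qed.

Lemma lt_cons_oexp x L y : (x :: L < [:: y]) = (x < y)%N.
Proof. by rewrite lt_oexp. Qed.

Lemma lt_oexpS m : [:: m] < [:: m.+1].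
Proof. by rewrite lt_oexp /=. Qed.

Lemma oadd0s b : oadd [::] b = b.
Proof. by case: b. Qed.

Lemma oadd_absorb a y b : cnf a -> a < [:: y] -> oadd a (y :: b) = y :: b.
Proof.
case: a => [//|z a]; rewrite cnf_cons lt_oexp => /andP[az _] /= zy.
rewrite leqNgt zy (@eq_in_filter _ _ pred0) ?filter_pred0 // => x /(allP az) /= xz.
by rewrite leqNgt (leq_ltn_trans xz zy).
Qed.

Lemma oadd_cons z a y b :
  oadd (z :: a) (y :: b) = if (y <= z)%N then z :: oadd a (y :: b) else oadd a (y :: b).
Proof. by rewrite /oadd /=; case: ifP. Qed.

Lemma cnf_oadd a b : cnf a -> cnf b -> cnf (oadd a b).
Proof.
case: b => [//|y b] + hb; elim: a => [//|z a IH]; rewrite cnf_cons => /andP[az ha].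
rewrite oadd_cons; case: ifP => yz; last exact: IH.
rewrite cnf_cons IH // andbT /oadd all_cat all_filter.
move: hb; rewrite cnf_cons => /andP[yb _] /=; rewrite yz /=.
apply/andP; split; apply/allP => w; first by move=> /(allP az) wz; apply/implyP.
by move=> /(allP yb) /= wy; apply: leq_trans wy yz.
Qed.

Lemma oaddA a b c : cnf b -> oadd (oadd a b) c = oadd a (oadd b c).
Proof.
case: c => [//|z c]; case: b => [//|y b] hb.
rewrite /oadd filter_cat /= -/(oadd a _) -catA -filter_predI.
move: hb; rewrite cnf_cons => /andP[yb _].
case: (leqP z y) => zy /=.
  congr (_ ++ _); apply: eq_filter => x /=; apply/andP/idP => [[] //|yx].
  by split=> //; apply: leq_trans zy yx.
rewrite (@eq_in_filter _ _ pred0 b) ?filter_pred0 => [|x /(allP yb) /= xy]; last by lia.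
by congr (_ ++ _); apply: eq_filter => x /=; apply/andP/idP => [[] //|zx]; split=> //; lia.
Qed.

Lemma oadd_homo_lt a : cnf a -> {homo oadd a : i b / i < b}.
Proof.
move=> + i [|y b]; rewrite ?ltxis0 //.
elim: a i => [|z a IH] i; first by rewrite !oadd0s.
rewrite cnf_cons => /andP[az ha] hib.
have zabs (x : nat) c : (z < x)%N -> oadd (z :: a) (x :: c) = x :: c.
  by move=> zx; apply: oadd_absorb; rewrite ?cnf_cons ?az // lt_oexp /= zx.
case: i hib => [|x i] hib.
  case: (leqP y z) => yz; last by rewrite zabs // neqhead_ltxiE ?ltn_eqF.
  by rewrite oadd_cons yz eqhead_ltxiE (IH [::]).
have xy : (x <= y)%N by move: hib; rewrite ltxi_cons leEnat => /andP[].
case: (leqP y z) => yz.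
  by rewrite !oadd_cons yz (leq_trans xy yz) eqhead_ltxiE; apply: IH.
rewrite (zabs y) //; case: (leqP x z) => xz; last by rewrite zabs.
by rewrite oadd_cons xz neqhead_ltxiE ?ltn_eqF.
Qed.

Lemma le_oadd2l a : cnf a -> {mono oadd a : i b / i <= b}.
Proof. by move/oadd_homo_lt/le_mono. Qed.

Lemma lt_oadd2l a : cnf a -> {mono oadd a : i b / i < b}.
Proof. by move/le_oadd2l/leW_mono. Qed.

Lemma oaddI a : cnf a -> injective (oadd a).
Proof. by move/le_oadd2l/inc_inj. Qed.

Lemma lt_oaddr a b : cnf a -> b != [::] -> a < oadd a b.
Proof. by move=> ha b0; rewrite -[X in X < _]/(oadd a [::]) lt_oadd2l // ltxi0s. Qed.

Lemma le_oaddr a b : cnf a -> a <= oadd a b.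
Proof. by move=> ha; rewrite -[X in X <= _]/(oadd a [::]) le_oadd2l. Qed.

(* [osub c a] is the [e] with [oadd a e = c] when [a <= c] (see [osubK]); junk otherwise. *)
Fixpoint osub (c a : seq nat) : seq nat :=
  match a, c with
  | [::], _ => c
  | _ :: _, [::] => [::]
  | z :: a', w :: c' => if w == z then osub c' a' else c
  end.

Lemma osubK a c : cnf a -> cnf c -> a <= c -> cnf (osub c a) /\ oadd a (osub c a) = c.
Proof.
elim: a c => [|z a IH] [|w c] ha hc ac //=.
have zw : (z <= w)%N by move: ac; rewrite lexi_cons leEnat => /andP[].
case: eqP => [wz|/eqP wz]; last first.
  by split=> //; rewrite oadd_absorb // lt_oexp /= ltn_neqAle eq_sym wz zw.
subst w; move: ac hc; rewrite eqhead_lexiE => ac; rewrite cnf_cons => /andP[cz hc].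
have [he E] := IH c (cnf_tail ha) hc ac; split=> //.
case Ee: (osub c a) E he => [|y e] E he; first by rewrite -E.
have yz : (y <= z)%N by apply: (allP cz); rewrite -E /oadd mem_cat mem_head orbT.
by rewrite oadd_cons yz E.
Qed.

Lemma oadd_single e L : cnf (e :: L) -> oadd [:: e] L = e :: L.
Proof. by case: L => [//|y L]; rewrite cnf_cons oadd_cons => /andP[/andP[-> _] _]. Qed.

Lemma cnf_nseq k m : cnf (nseq k m).
Proof.
elim: k => // k IH; rewrite [nseq _ _]/= cnf_cons IH andbT.
by apply/allP => x /nseqP[-> _].
Qed.

Lemma oadd_nseq k m : oadd (nseq k m) [:: m] = nseq k.+1 m.
Proof. by elim: k => // k IH; rewrite [nseq k.+1 m]/= oadd_cons leqnn IH. Qed.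

Lemma nseq_lt_oexpS k m : nseq k m < [:: m.+1].
Proof. by case: k => //= k; rewrite lt_oexp /=. Qed.

Lemma nseq_cofinal q m : cnf q -> q < [:: m.+1] -> exists k, q < nseq k m.
Proof.
move=> hq qm; exists (size q).+1; elim: q hq qm => [//|x q IH] hq.
rewrite lt_oexp /= ltnS leq_eqVlt => /orP[/eqP xm|xm]; last by rewrite neqhead_ltxiE ?ltn_eqF.
subst x; rewrite eqhead_ltxiE; apply: IH; first exact: cnf_tail hq.
move: hq; rewrite cnf_cons lt_oexp; case: q => //= y q /andP[/andP[ym _] _].
by rewrite ltnS ym.
Qed.

Lemma inlen_oadd a L i : cnf a -> inlen L i -> inlen (oadd a L) (oadd a i).
Proof. by move=> ha; rewrite !inlenE => /andP[hi iL]; rewrite cnf_oadd ?lt_oadd2l. Qed.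

Lemma increasing_choice (R : nat -> nat -> Prop) :
  (forall i M, exists2 j, (M <= j)%N & R i j) ->
  forall M, exists h : nat -> nat,
    [/\ {homo h : i j / (i < j)%N}, (M <= h 0)%N & forall k, R k (h k)].
Proof.
move=> HR M; have [g gP] : exists g : nat * nat -> nat,
    forall iM, (iM.2 <= g iM)%N /\ R iM.1 (g iM).
  apply: (choice (fun iM j => (iM.2 <= j)%N /\ R iM.1 j)) => -[i M'].
  by have [j] := HR i M'; exists j.
pose h := fix h k := if k is k'.+1 then g (k'.+1, (h k').+1) else g (0, M).
exists h; split; first by apply: homo_ltn ltn_trans _ => k; apply: (gP (k.+1, _)).1.
  exact: (gP (0, M)).1.
by case=> [|k]; apply: (gP (_, _)).2.
Qed.

Lemma wqo_good_tail X (R : X -> X -> Prop) (A : X -> Prop) (x : nat -> X) :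
  wqo_on R A -> (forall k, A (x k)) ->
  exists N, forall i M, exists2 j, (M <= j)%N & R (x (N + i)) (x (N + j)).
Proof.
move=> wqo Ax; apply: NNPP => noN.
(* Otherwise there are indices c 0, c 1, ... none of which is R-below a later one. *)
have bad N : exists iM : nat * nat, forall j, (iM.2 <= j)%N -> ~ R (x (N + iM.1)) (x (N + j)).
  apply: NNPP => H; apply: noN; exists N => i M; apply: NNPP => H'; apply: H.
  by exists (i, M) => j Mj Rj; apply: H'; exists j.
have [g gP] := choice _ bad.
pose B := fix B t := if t is t'.+1 then B t' + maxn (g (B t')).1.+1 (g (B t')).2 else 0.
pose c t := B t + (g (B t)).1.
have B_le : {homo B : s t / (s <= t)%N}.
  by apply: homo_leq leqnn leq_trans _ => t; apply: leq_addr.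
have [i [j [ij Rij]]] := wqo (x \o c) (fun t => Ax _).
have Bij : (B i + maxn (g (B i)).1.+1 (g (B i)).2 <= B j)%N := B_le _ _ ij.
apply: (gP (B i) (c j - B i)); first by rewrite /c; lia.
by rewrite /c subnKC; [exact: Rij | lia].
Qed.

Definition range_in Q (l : list Q) (s : tseq Q) :=
  forall i, inlen (tlen s) i -> List.In (Defs.tval s i) l.

Section Segments.
Variables (T : Type) (le : T -> T -> Prop) (f : seq nat -> T).
Hypothesis le_qo : quasi_order le.

Definition piece a L : tseq T := TSeq L (fun i => f (oadd a i)).

Definition inseg (a c : seq nat) := [pred x : seq nat | [&& cnf x, a <= x & x < c]].

Definition seg_embeds a c b e := exists F : seq nat -> seq nat,
  [/\ {in inseg a c, forall x, inseg b e (F x)},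
      {in inseg a c &, forall x y, x < y -> F x < F y}
    & {in inseg a c, forall x, le (f x) (f (F x))}].

Lemma inseg_oadd a L i : cnf a -> inlen L i -> oadd a i \in inseg a (oadd a L).
Proof.
by move=> ha; rewrite inlenE => /andP[hi iL]; rewrite inE cnf_oadd ?le_oaddr ?lt_oadd2l.
Qed.

Lemma inseg_osub a L x : cnf a -> x \in inseg a (oadd a L) ->
  inlen L (osub x a) /\ oadd a (osub x a) = x.
Proof.
move=> ha /and3P[hx ax xL]; have [hs E] := osubK ha hx ax.
by rewrite inlenE hs -(lt_oadd2l ha) E.
Qed.

Lemma piece_embedsP a L b L' : cnf a -> cnf b ->
  embeds le (piece a L) (piece b L') <-> seg_embeds a (oadd a L) b (oadd b L').
Proof.
move=> ha hb; split=> [[F [F1 F2 F3]]|[F [F1 F2 F3]]].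
  exists (fun x => oadd b (F (osub x a))); split.
  - by move=> x /(inseg_osub ha) [/F1 /(inseg_oadd hb)].
  - move=> x y /(inseg_osub ha) [hx Ex] /(inseg_osub ha) [hy Ey].
    by rewrite -{1}Ex -{1}Ey !lt_oadd2l // -!oltE; apply: F2.
  - by move=> x /(inseg_osub ha) [hx Ex]; rewrite -{1}Ex; apply: F3.
exists (fun i => osub (F (oadd a i)) b); split.
- by move=> i /(inseg_oadd ha) /F1 /(inseg_osub hb) [].
- move=> i j hi hj; rewrite !oltE => ij; rewrite -(lt_oadd2l hb).
  have [_ ->] := inseg_osub hb (F1 _ (inseg_oadd ha hi)).
  have [_ ->] := inseg_osub hb (F1 _ (inseg_oadd ha hj)).
  by apply: F2; rewrite ?inseg_oadd ?lt_oadd2l.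
- move=> i hi /=; have [_ ->] := inseg_osub hb (F1 _ (inseg_oadd ha hi)).
  exact/F3/inseg_oadd.
Qed.

Lemma seg_embeds_tail b c e : c <= b -> seg_embeds b e c e.
Proof.
case: le_qo => le_refl _ cb; exists id; split=> // x /and3P[hx bx xe].
by rewrite inE hx xe (le_trans cb bx).
Qed.

Lemma seg_embeds_trans a c b e b' e' :
  seg_embeds a c b e -> seg_embeds b e b' e' -> seg_embeds a c b' e'.
Proof.
case: le_qo => _ le_trans [F [F1 F2 F3]] [G [G1 G2 G3]].
exists (G \o F); split=> [x hx|x y hx hy xy|x hx] /=; first exact/G1/F1.
  exact: G2 (F1 _ hx) (F1 _ hy) (F2 _ _ hx hy xy).
exact: le_trans (F3 _ hx) (G3 _ (F1 _ hx)).
Qed.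

Lemma piece_indecomposable a L : cnf a ->
  (forall c, cnf c -> a < c -> c < oadd a L -> seg_embeds a (oadd a L) c (oadd a L)) ->
  indecomposable le (piece a L).
Proof.
move=> ha tails d g hd hg /eqP d0 /eqP g0 /= EL.
have hc : cnf (oadd a d) := cnf_oadd ha hd.
have Ec : oadd (oadd a d) g = oadd a L by rewrite oaddA // EL.
have /piece_embedsP [//|//|F [F1 F2 F3]] : seg_embeds a (oadd a L) (oadd a d) (oadd (oadd a d) g).
  by rewrite Ec; apply: tails; rewrite ?lt_oaddr // -EL lt_oadd2l ?lt_oaddr.
by exists F; split=> // i hi /=; rewrite -oaddA //; apply: F3.
Qed.

Section Blocks.
Variables (st ln : nat -> seq nat) (E : seq nat).
Hypothesis cnf_st : forall j, cnf (st j).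
Hypothesis stS : forall j, st j.+1 = oadd (st j) (ln j).
Hypothesis st_lt_E : forall j, st j < E.
Hypothesis st_cofinal : forall x, cnf x -> x < E -> exists j, x < st j.

Lemma st_le : {homo st : i j / (i <= j)%N >-> i <= j}.
Proof. by apply: homo_leq lexx le_trans _ => j; rewrite stS le_oaddr. Qed.

Lemma st_block x : x \in inseg (st 0) E -> exists k, st k <= x < st k.+1.
Proof.
case/and3P=> hx x0 xE; have [j xj] := st_cofinal hx xE.
case: (@ex_minnP (fun j => x < st j) (ex_intro _ j xj)) => -[|k]; first by rewrite ltNge x0.
by move=> xk kmin; exists k; rewrite xk andbT leNgt; apply/negP => /kmin; rewrite ltnn.
Qed.

Lemma seg_embeds_blocks (h : nat -> nat) : {homo h : i j / (i < j)%N} ->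
  (forall k, seg_embeds (st k) (st k.+1) (st (h k)) (st (h k).+1)) ->
  seg_embeds (st 0) E (st (h 0)) E.
Proof.
move=> h_lt emb; have [F FP] := choice _ emb.
have [J JP] : exists J, forall x, x \in inseg (st 0) E -> st (J x) <= x < st (J x).+1.
  apply: (choice (fun x k => x \in inseg (st 0) E -> st k <= x < st k.+1)) => x.
  by case: (boolP (x \in inseg (st 0) E)) => [/st_block [k] | _]; [exists k | exists 0].
have inJ x : x \in inseg (st 0) E -> x \in inseg (st (J x)) (st (J x).+1).
  by move=> hx; have /andP[? ?] := JP x hx; case/and3P: hx => *; apply/and3P.
exists (fun x => F (J x) x); split.
- move=> x /inJ; case: (FP (J x)) => F1 _ _ /F1 /and3P[hy y0 yE]; apply/and3P; split=> //.
    by apply: le_trans y0; apply/st_le/(ltnW_homo h_lt).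
  exact: lt_trans yE (st_lt_E _).
- move=> x y hx hy xy; case: (ltngtP (J x) (J y)) => [Jxy|Jyx|Jeq].
  + case: (FP (J x)) (FP (J y)) => [Fx _ _] [Fy _ _].
    have /and3P[_ _ Fx'] := Fx _ (inJ _ hx); have /and3P[_ Fy' _] := Fy _ (inJ _ hy).
    by apply: lt_le_trans Fx' (le_trans (st_le _) Fy'); apply: h_lt.
  + have /andP[_ yJ] := JP y hy; have /andP[Jx _] := JP x hx.
    have := lt_le_trans yJ (le_trans (st_le Jyx) Jx).
    by rewrite ltNge (ltW xy).
  + case: (FP (J x)) => _ F2 _; rewrite -Jeq; apply: F2 (inJ _ hx) _ xy.
    by rewrite Jeq; apply: inJ.
- by move=> x hx; case: (FP (J x)) => _ _ F3; apply/F3/inJ.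
Qed.

Lemma blocks_indecomposable L : oadd (st 0) L = E ->
  (forall i M, exists2 j, (M <= j)%N & embeds le (piece (st i) (ln i)) (piece (st j) (ln j))) ->
  indecomposable le (piece (st 0) L).
Proof.
move=> EL good; apply: piece_indecomposable => // c hc _; rewrite EL => cE.
have [M cM] := st_cofinal hc cE.
have [h [h_lt Mh emb]] := increasing_choice good M.
apply: (seg_embeds_trans _ (seg_embeds_tail _ (ltW (lt_le_trans cM (st_le Mh))))).
apply: seg_embeds_blocks h_lt _ => k; rewrite !stS; exact/piece_embedsP.
Qed.
End Blocks.

Definition indec_piece b a L := [/\ cnf L, L != [::], L < b & indecomposable le (piece a L)].

Fixpoint decomp b a c (Ls : seq (seq nat)) : Prop :=
  if Ls is L :: Ls' then indec_piece b a L /\ decomp b (oadd a L) c Ls' else a = c.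

Fixpoint pieces a (Ls : seq (seq nat)) : list (tseq T) :=
  if Ls is L :: Ls' then piece a L :: pieces (oadd a L) Ls' else [::].

Lemma decomp_cat b a c e Ls1 Ls2 :
  decomp b a c Ls1 -> decomp b c e Ls2 -> decomp b a e (Ls1 ++ Ls2).
Proof. by elim: Ls1 a => [|L Ls IH] a /= => [->|[gL /IH D /D]]. Qed.

Lemma decomp_widen b b' a c Ls : b <= b' -> decomp b a c Ls -> decomp b' a c Ls.
Proof.
move=> bb'; elim: Ls a => [|L Ls IH] a //= [[hL L0 Lb ind] /IH]; split=> //.
by split=> //; apply: lt_le_trans Lb bb'.
Qed.

Lemma decomp_lt b a c Ls : cnf a -> decomp b a c Ls -> Ls != [::] -> a < c.
Proof.
elim: Ls a => [|L Ls IH] a ha //= [[hL L0 _ _] D] _.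
apply: lt_le_trans (lt_oaddr ha L0) _; case: Ls IH D => [_ -> //|L' Ls IH D].
exact/ltW/(IH _ (cnf_oadd ha hL) D).
Qed.

Definition has_indec_tail m := forall a, cnf a ->
  exists2 p, cnf p && (p < [:: m]) & indecomposable le (piece (oadd a p) [:: m]).

Definition has_decomp m := forall a L, cnf a -> cnf L -> L < [:: m] ->
  exists Ls, decomp [:: m] a (oadd a L) Ls.

Lemma has_indec_tail0 : has_indec_tail 0.
Proof.
move=> a ha; exists [::] => //; apply: piece_indecomposable => // c hc ac.
have [_ E] := osubK ha hc (ltW ac); rewrite -E lt_oadd2l // lt_oexp ltn0 orbF.
by move=> /eqP e0; move: ac; rewrite -E e0 ltxx.
Qed.

Lemma has_decomp0 : has_decomp 0.
Proof. by move=> a L _ _; rewrite lt_oexp ltn0 orbF => /eqP ->; exists [::]. Qed.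

Lemma has_decomp_succ e : has_indec_tail e -> has_decomp e -> has_decomp e.+1.
Proof.
move=> tail_e decomp_e a L + hL; elim: L a hL => [|x L IH] a hL ha; first by exists [::].
rewrite lt_cons_oexp ltnS leq_eqVlt => /orP[/eqP xe|xe]; last first.
  have [|Ls D] := decomp_e a (x :: L) ha hL; first by rewrite lt_cons_oexp.
  by exists Ls; apply: decomp_widen D; apply/ltW/lt_oexpS.
subst x; have [p /andP[hp pe] ind] := tail_e a ha.
have [Ls1 D1] := decomp_e a p ha hp pe.
have hae : cnf (oadd a [:: e]) by rewrite cnf_oadd.
have [|Ls2 D2] := IH (oadd a [:: e]) (cnf_tail hL) hae.
  move: hL; rewrite cnf_cons lt_oexp; case: L {IH} => //= y L /andP[/andP[ye _] _].
  by rewrite ltnS ye.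
exists (Ls1 ++ [:: e] :: Ls2); apply: decomp_cat (decomp_widen _ D1) _.
  exact/ltW/lt_oexpS.
split; first by split=> //; apply: lt_oexpS.
by rewrite oaddA // oadd_absorb // -(oadd_single hL) -oaddA.
Qed.

Section Stream.
Variables (b E : seq nat) (pos : nat -> seq nat) (Ls : nat -> seq (seq nat)).
Hypothesis cnf_pos : forall k, cnf (pos k).
Hypothesis decomp_Ls : forall k, decomp b (pos k) (pos k.+1) (Ls k).
Hypothesis Ls_neq0 : forall k, Ls k != [::].
Hypothesis pos_lt_E : forall k, pos k < E.
Hypothesis pos_cofinal : forall x, cnf x -> x < E -> exists k, x < pos k.

(* In state [(k, r)], [r] is the nonempty unused suffix of the decomposition [Ls k]. *)
Definition stream_next (s : nat * seq (seq nat)) :=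
  if s.2 is _ :: (_ :: _) as r then (s.1, r) else (s.1.+1, Ls s.1.+1).

Fixpoint stream_state j := if j is j'.+1 then stream_next (stream_state j') else (0, Ls 0).

Definition stream_len j := head [::] (stream_state j).2.

Fixpoint stream_pos j := if j is j'.+1 then oadd (stream_pos j') (stream_len j') else pos 0.

Lemma stream_stateP j : (stream_state j).2 != [::] /\
  decomp b (stream_pos j) (pos (stream_state j).1.+1) (stream_state j).2.
Proof.
elim: j => [|j]; first exact: conj (Ls_neq0 0) (decomp_Ls 0).
rewrite /= /stream_len; case: (stream_state j) => k [|L [|L' r]] [] //= _ [_ D].
  by rewrite D; apply: conj (Ls_neq0 _) (decomp_Ls _).
by split.
Qed.

Lemma stream_piece j : indec_piece b (stream_pos j) (stream_len j).
Proof.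
by case: (stream_stateP j); rewrite /stream_len; case: (stream_state j).2 => [|L r] //= _ [].
Qed.

Lemma cnf_stream_pos j : cnf (stream_pos j).
Proof. by elim: j => //= j IH; case: (stream_piece j) => hL _ _ _; apply: cnf_oadd. Qed.

Lemma stream_pos_lt_E j : stream_pos j < E.
Proof.
have [r0 D] := stream_stateP j.
exact: lt_trans (decomp_lt (cnf_stream_pos j) D r0) (pos_lt_E _).
Qed.

Lemma stream_next_block k r j : stream_state j = (k, r) ->
  exists j', stream_state j' = (k.+1, Ls k.+1) /\ stream_pos j' = pos k.+1.
Proof.
elim: r j => [|L r IH] j Sj; first by have := (stream_stateP j).1; rewrite Sj.
have [_] := stream_stateP j; rewrite Sj /= => -[_ D].
case: r IH Sj D => [|L' r] IH Sj D; last by apply: (IH j.+1); rewrite /= Sj.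
by exists j.+1; rewrite /= /stream_len Sj.
Qed.

Lemma stream_pos_hits k : exists j, stream_pos j = pos k.
Proof.
suff [j [Sj Pj]] : exists j, stream_state j = (k, Ls k) /\ stream_pos j = pos k by exists j.
elim: k => [|k [j [Sj _]]]; [by exists 0 | exact: stream_next_block Sj].
Qed.

Lemma stream_pos_cofinal x : cnf x -> x < E -> exists j, x < stream_pos j.
Proof.
move=> hx /(pos_cofinal hx) [k xk]; have [j Pj] := stream_pos_hits k.
by exists j; rewrite Pj.
Qed.
End Stream.

Lemma decomp_concat_list b a e Ls (u : tseq T) : cnf a -> cnf e -> e != [::] ->
  tseq_equiv u (piece a e) -> decomp b a (oadd a e) Ls -> concat_list u (pieces a Ls).
Proof.
elim: Ls a e u => [|L Ls IH] a e u ha he e0 [Eu Hu] /=.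
  by move=> ae; move: e0; have -> : e = [::] by apply: (oaddI ha); rewrite -ae.
case=> [[hL L0 _ _]]; case: Ls IH => [|L2 Ls] IH D.
  by move: D => /= /(oaddI ha) ->; split.
have Le : L < e by rewrite -(lt_oadd2l ha); apply: decomp_lt D _; rewrite ?cnf_oadd.
have [he' Ee] := osubK hL he (ltW Le).
have e'0 : osub e L != [::] by apply: contraTneq Le => e'0; rewrite -Ee e'0 ltxx.
exists (piece (oadd a L) (osub e L)); split; first by split=> //; apply/eqP.
split; last by apply: IH (cnf_oadd ha hL) he' e'0 _ _; rewrite ?oaddA ?Ee.
split=> [|i /andP[hi iL]|g hg] /=.
- by rewrite Eu Ee.
- by apply: Hu; rewrite Eu inlenE hi (lt_trans _ Le) // -oltE.
- by rewrite Hu ?oaddA // Eu -Ee; apply: inlen_oadd.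
Qed.

Section Wqo.
Variables (n : nat) (l : list T).
Hypothesis f_range : forall i, List.In (f i) l.
Hypothesis wqo_small : wqo_on (embeds le) (fun s => iF le [:: n] s /\ range_in l s).

Lemma iF_piece b a L : cnf L -> L != [::] -> L < b ->
  indecomposable le (piece a L) -> iF le b (piece a L).
Proof.
move=> hL /eqP L0 Lb ind; split=> //; split; first by split.
by split; [rewrite oltE | exists l => i _; apply: f_range].
Qed.

Lemma blocks_tail_indecomposable (st ln : nat -> seq nat) E :
  (forall j, cnf (st j)) -> (forall j, st j.+1 = oadd (st j) (ln j)) ->
  (forall j, st j < E) -> (forall x, cnf x -> x < E -> exists j, x < st j) ->
  (forall j, iF le [:: n] (piece (st j) (ln j))) ->
  exists N, forall L, oadd (st N) L = E -> indecomposable le (piece (st N) L).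
Proof.
move=> cnf_st stS st_lt_E st_cofinal small.
have [N good] := wqo_good_tail (x := fun j => piece (st j) (ln j)) wqo_small
  (fun j => conj (small j) (fun i _ => f_range _)).
exists N => L; rewrite -(addn0 N) => EL.
apply: (blocks_indecomposable (st := st \o addn N) (ln := ln \o addn N) _ _ _ _ EL good).
- by move=> j; apply: cnf_st.
- by move=> j /=; rewrite addnS stS.
- by move=> j; apply: st_lt_E.
move=> x hx /(st_cofinal _ hx) [j xj]; exists j; apply: lt_le_trans xj _.
by apply: (homo_leq lexx le_trans) (leq_addl _ _) => k; rewrite stS le_oaddr.
Qed.

Lemma pieces_iF b a c Ls : decomp b a c Ls -> List.Forall (iF le b) (pieces a Ls).
Proof.
elim: Ls a => [|L Ls IH] a /=; first by constructor.
by case=> [[hL L0 Lb ind] D]; constructor; [apply: iF_piece | apply: IH].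
Qed.

Lemma has_indec_tail_succ m : (m < n)%N -> has_decomp m.+1 -> has_indec_tail m.+1.
Proof.
move=> mn decomp_m a ha; pose pos k := oadd a (nseq k m); pose E := oadd a [:: m.+1].
have cnf_pos k : cnf (pos k) := cnf_oadd ha (cnf_nseq k m).
have posS k : pos k.+1 = oadd (pos k) [:: m] by rewrite /pos oaddA ?cnf_nseq // oadd_nseq.
have [Ls D] : exists Ls, forall k, decomp [:: m.+1] (pos k) (pos k.+1) (Ls k).
  apply: (choice (fun k Ls => decomp [:: m.+1] (pos k) (pos k.+1) Ls)) => k.
  by rewrite posS; apply: decomp_m => //; apply: lt_oexpS.
have Ls_neq0 k : Ls k != [::].
  apply/eqP => Ls0; have := D k; rewrite Ls0 /= => /esym Ek.
  by have := lt_oaddr (cnf_pos k) (isT : [:: m] != [::]); rewrite -posS Ek ltxx.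
have pos_lt_E k : pos k < E by rewrite lt_oadd2l // nseq_lt_oexpS.
have pos_cofinal x : cnf x -> x < E -> exists k, x < pos k.
  move=> hx xE; case: (leP a x) => [ax|xa]; last by exists 0.
  have [hq Eq] := osubK ha hx ax; rewrite -Eq lt_oadd2l // in xE.
  by have [k qk] := nseq_cofinal hq xE; exists k; rewrite -Eq lt_oadd2l.
pose st := stream_pos pos Ls; pose ln := stream_len Ls.
have small j : iF le [:: n] (piece (st j) (ln j)).
  case: (stream_piece D Ls_neq0 j) => hL L0 Lm ind; apply: iF_piece => //.
  by apply: lt_le_trans Lm _; rewrite lexi_cons leEnat mn implybT.
have cnf_st := cnf_stream_pos cnf_pos D Ls_neq0.
have [N tail] := blocks_tail_indecomposable cnf_st (fun j => erefl)
  (stream_pos_lt_E cnf_pos D Ls_neq0 pos_lt_E) (stream_pos_cofinal D Ls_neq0 pos_cofinal) small.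
have aN : a <= st N.
  by apply: (homo_leq (f := st) lexx le_trans _ (leq0n N)) => j; apply: le_oaddr.
have [hp Ep] := osubK ha (cnf_st N) aN.
have pm : osub (st N) a < [:: m.+1].
  by rewrite -(lt_oadd2l ha) Ep; apply: stream_pos_lt_E.
exists (osub (st N) a); first by rewrite hp pm.
by rewrite Ep; apply: tail; rewrite -Ep oaddA // oadd_absorb.
Qed.

Lemma has_indec_tail_and_decomp : has_indec_tail n /\ has_decomp n.+1.
Proof.
suff: forall m, (m <= n)%N -> has_indec_tail m /\ has_decomp m.+1 by apply.
elim=> [_|m IH mn].
  exact: conj has_indec_tail0 (has_decomp_succ has_indec_tail0 has_decomp0).
have [_ decomp_m] := IH (ltnW mn); have tail_m := has_indec_tail_succ mn decomp_m.
by split; last apply: has_decomp_succ.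
Qed.
End Wqo.
End Segments.

Lemma indecomposable_equiv Q (le : Q -> Q -> Prop) (s t : tseq Q) :
  tseq_equiv s t -> indecomposable le t -> indecomposable le s.
Proof.
move=> [Est Hst] ind d g hd hg d0 g0 E.
have [F [F1 F2 F3]] := ind d g hd hg d0 g0 (etrans E Est).
have inF i : inlen (tlen s) i -> inlen (tlen s) (oadd d (F i)).
  by rewrite -{2}E Est => /F1; apply: inlen_oadd.
exists F; split=> [||i hi /=]; rewrite ?Est //.
by rewrite !Hst ?inF //; apply: F3; rewrite -Est.
Qed.

Lemma wqo_iF_range_in n :
  (forall (P : finType) (r : P -> P -> Prop), quasi_order r ->
     wqo_on (embeds r) (iF r (oexp n))) ->
  forall Q (le : Q -> Q -> Prop) (l : list Q), quasi_order le ->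
  wqo_on (embeds le) (fun s => iF le [:: n] s /\ range_in l s).
Proof.
(* Values in [l] are coded by their indices in [l], a finite quasi-order. *)
move=> wqo_fin Q le l [le_refl le_trans] x Hx; pose t0 := Defs.tval (x 0) [::].
pose P := 'I_(List.length l).+1; pose val_of (k : P) := List.nth k l t0.
have [idx idxK] : exists idx : Q -> P, forall q, List.In q l -> val_of (idx q) = q.
  apply: (choice (fun q k => List.In q l -> val_of k = q)) => q.
  case: (classic (List.In q l)) => [|ql]; last by exists ord0.
  by move=> /(List.In_nth _ _ t0) [k [/ssrnat.ltP kl <-]]; exists (Ordinal (leqW kl)).
pose r (i j : P) := le (val_of i) (val_of j).
have r_qo : quasi_order r by split=> [i|i j k]; [apply: le_refl | apply: le_trans].
pose y k := TSeq (tlen (x k)) (fun i => idx (Defs.tval (x k) i)).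
have yK k i : inlen (tlen (x k)) i -> val_of (Defs.tval (y k) i) = Defs.tval (x k) i.
  by move=> hi; apply/idxK/(Hx k).2.
have iFy k : iF r (oexp n) (y k).
  have [[wfx [lx _]] indx] := (Hx k).1; split.
    by split=> //; split=> //; exists (List.map idx l) => i hi; apply/List.in_map/(Hx k).2.
  move=> d g hd hg d0 g0 E; have [F [F1 F2 F3]] := indx d g hd hg d0 g0 E.
  exists F; split=> // i hi; rewrite /r !yK //; first exact: F3.
  by rewrite -E; apply/inlen_oadd/F1.
have [i [j [ij [F [F1 F2 F3]]]]] := wqo_fin P r r_qo y iFy.
exists i, j; split=> //; exists F; split=> // a ha.
by have := F3 a ha; rewrite /r !yK //; apply: F1.
Qed.

Definition fill Q (s : tseq Q) i := if inlen (tlen s) i then Defs.tval s i else Defs.tval s [::].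

Lemma fill_range Q (l : list Q) (s : tseq Q) :
  tlen s != [::] -> range_in l s -> forall i, List.In (fill s i) l.
Proof.
by move=> s0 Rs i; rewrite /fill; case: ifP => [|_]; apply: Rs; rewrite // inlenE ltxi0s.
Qed.

Lemma tseq_equiv_fill Q (s : tseq Q) : tseq_equiv s (piece (fill s) [::] (tlen s)).
Proof. by split=> // i hi /=; rewrite oadd0s /fill hi. Qed.

Lemma indecomposable_or_split Q (le : Q -> Q -> Prop) (l : list Q) (s : tseq Q) n :
  tlen s = [:: n] -> range_in l s -> has_indec_tail le (fill s) n ->
  iFeq le (oexp n) s \/
  exists s0 s1, [/\ sF (oexp n) s0, iFeq le (oexp n) s1 & concat_eq s s0 s1].
Proof.
move=> Es Rs tails; have s0 : tlen s != [::] by rewrite Es.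
have [p /andP[hp pn] ind] := tails [::] isT; rewrite oadd0s in ind.
case: (eqVneq p [::]) => [p0|/eqP p0].
  left; split; first by rewrite /sFeq /wf Es; split=> //; split=> //; exists l.
  by apply: indecomposable_equiv (tseq_equiv_fill s) _; rewrite Es; rewrite p0 in ind.
right; exists (TSeq p (Defs.tval s)), (piece (fill s) p [:: n]); split.
- split; first by split.
  split; first by rewrite oltE.
  exists l => i; rewrite /= !inlenE => /andP[hi ip]; apply: Rs.
  by rewrite Es inlenE hi (lt_trans ip pn).
- split=> //; split; first by split.
  by split=> //; exists l => i _; apply: fill_range.
- split=> // [|g hg]; first by rewrite Es oadd_absorb.
  rewrite /= /fill ifT // Es -(oadd_absorb [::] hp pn).
  exact: inlen_oadd.
Qed.

Lemma concat_indecomposables Q (le : Q -> Q -> Prop) (l : list Q) (s : tseq Q) n :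
  wf s -> tlen s < [:: n] -> range_in l s -> has_decomp le (fill s) n ->
  exists ss, concat_list s ss /\ List.Forall (iF le [:: n]) ss.
Proof.
move=> [hs /eqP s0] sn Rs decomps; have [Ls D] := decomps [::] (tlen s) isT hs sn.
exists (pieces (fill s) [::] Ls); split.
  exact: decomp_concat_list (isT : cnf [::]) hs s0 (tseq_equiv_fill s) D.
exact (pieces_iF (fill_range s0 Rs) D).
Qed.

Theorem proposition4p22 (n : nat) :
  (forall (P : finType) (r : P -> P -> Prop), quasi_order r ->
     wqo_on (embeds r) (iF r (oexp n))) ->
  forall (Q : Type) (le : Q -> Q -> Prop), quasi_order le ->
    (forall s : tseq Q, sFeq (oexp n) s ->
       iFeq le (oexp n) s \/
       exists s0 s1, [/\ sF (oexp n) s0, iFeq le (oexp n) s1 & concat_eq s s0 s1])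
    /\
    (forall s : tseq Q, sF (oexp n.+1) s ->
       exists ss : list (tseq Q),
         concat_list s ss /\ List.Forall (iF le (oexp n.+1)) ss).
Proof.
move=> wqo_fin Q le qo; split=> s [[hs /eqP s0] [slen [l Rs]]];
  have [tails decomps] := has_indec_tail_and_decomp qo (fill_range s0 Rs)
    (wqo_iF_range_in (l := l) wqo_fin qo).
- exact: indecomposable_or_split slen Rs tails.
- apply: (concat_indecomposables _ _ Rs decomps); last by rewrite -oltE.
  by split=> //; apply/eqP.
Qed.
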